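(* When the critical distance is $\beta=1$, the Best Response problem for celebrity games is solvable in polynomial time.
   Context: A celebrity game $\Gamma=\langle V,(w_u)_{u\in V},\alpha,\beta\rangle$ consists of a set of players $V=\{1,\dots,n\}$, celebrity weights $w_u>0$, a link cost $\alpha>0$ and a critical distance $\beta$ with $1\le\beta\le n-1$. A strategy of player $u$ is a set $S_u\subseteq V\setminus\{u\}$; a strategy profile is $S=(S_1,\dots,S_n)$; its outcome graph $G[S]$ is the undirected graph on $V$ with edge set $\{\{u,v\}: u\in S_v\text{ or }v\in S_u\}$. With $d_G$ the graph distance (infinite between different connected components), the cost of player $u$ is $c_u(S)=\alpha|S_u|+\sum_{v:\,d_{G[S]}(u,v)>\beta}w_v$. For a profile $S$ and a strategy $S'_u$ of $u$, $(S_{-u},S'_u)$ denotes the profile obtained by replacing $S_u$ with $S'_u$. The Best Response problem: given a celebrity game $\Gamma$ (with rational parameters), a strategy profile $S$ and a player $u$, compute a strategy $S'_u\subseteq V\setminus\{u\}$ minimizing $c_u(S_{-u},S'_u)$. *)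

From mathcomp Require Import all_boot all_order all_algebra.
Set Implicit Arguments. Unset Strict Implicit. Unset Printing Implicit Defensive.
Import Order.TTheory GRing.Theory Num.Theory.
Local Open Scope ring_scope.

Definition adj (n : nat) (S : {ffun 'I_n -> {set 'I_n}}) : rel 'I_n :=
  fun x y => (y \in S x) || (x \in S y).

Fixpoint ball (n : nat) (e : rel 'I_n) (k : nat) (u : 'I_n) : {set 'I_n} :=
  match k with
  | 0 => [set u]
  | k'.+1 => ball e k' u :|: [set y | [exists x in ball e k' u, e x y]]
  end.

Definition far (n : nat) (S : {ffun 'I_n -> {set 'I_n}}) (beta : nat)
  (u v : 'I_n) : bool := v \notin ball (adj S) beta u.

Definition cost (n : nat) (w : 'I_n -> rat) (alpha : rat) (beta : nat)
  (S : {ffun 'I_n -> {set 'I_n}}) (u : 'I_n) : rat :=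
  alpha * (#|S u|)%:R + \sum_(v | far S beta u v) w v.

Definition upd (n : nat) (S : {ffun 'I_n -> {set 'I_n}}) (u : 'I_n)
  (X : {set 'I_n}) : {ffun 'I_n -> {set 'I_n}} :=
  [ffun x => if x == u then X else S x].

Definition best_response (n : nat) (w : 'I_n -> rat) (alpha : rat)
  (beta : nat) (S : {ffun 'I_n -> {set 'I_n}}) (u : 'I_n) (X : {set 'I_n}) :=
  u \notin X /\
  forall Y : {set 'I_n}, u \notin Y ->
    cost w alpha beta (upd S u X) u <= cost w alpha beta (upd S u Y) u.

(* Machine model: a unit-cost RAM whose registers hold rationals,      *)
(* with indirect addressing, addition, subtraction and comparisons     *)
(* (no multiplication/division, so unit cost is polynomially faithful  *)

Definition mem := nat -> rat.

Inductive expr :=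
  | EConst of rat
  | ELoad of expr
  | EAdd of expr & expr
  | ESub of expr & expr.

Inductive cond :=
  | CLt of expr & expr
  | CEq of expr & expr.

Inductive cmd :=
  | Skip
  | Assign of expr & expr
  | Seq of cmd & cmd
  | If of cond & cmd & cmd
  | While of cond & cmd.

Fixpoint eval (e : expr) (m : mem) : rat :=
  match e with
  | EConst q => q
  | ELoad a => m (Num.truncn (eval a m))
  | EAdd a b => eval a m + eval b m
  | ESub a b => eval a m - eval b m
  end.

Definition test (c : cond) (m : mem) : bool :=
  match c with
  | CLt a b => eval a m < eval b m
  | CEq a b => eval a m == eval b m
  end.

Definition config := (seq cmd * mem)%type.

Definition step (cf : config) : config :=
  let: (k, m) := cf in
  match k with
  | [::] => ([::], m)
  | Skip :: k' => (k', m)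
  | Assign a e :: k' =>
      let i := Num.truncn (eval a m) in
      let v := eval e m in
      (k', fun j => if j == i then v else m j)
  | Seq c1 c2 :: k' => (c1 :: c2 :: k', m)
  | If b c1 c2 :: k' => ((if test b m then c1 else c2) :: k', m)
  | While b c :: k' =>
      if test b m then (c :: While b c :: k', m) else (k', m)
  end.

(* Input encoding of an instance (beta = 1 is fixed by the problem):
   m 0 = n, m 1 = u, m 2 = alpha, m (3+i) = w_i,
   m (3 + n + n*x + y) = 1 if y \in S_x, 0 otherwise; all else 0. *)
Definition encode (n : nat) (w : 'I_n -> rat) (alpha : rat)
  (S : {ffun 'I_n -> {set 'I_n}}) (u : 'I_n) : mem :=
  fun j =>
    if j == 0%N then n%:R
    else if j == 1%N then (nat_of_ord u)%:R
    else if j == 2%N then alpha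
    else if (3 <= j < 3 + n)%N then
      (if insub (j - 3)%N is Some i then w i else 0)
    else if (3 + n <= j < 3 + n + n * n)%N then
      (if insub ((j - 3 - n) %/ n)%N is Some x then
         if insub ((j - 3 - n) %% n)%N is Some y then
           (if y \in S x then 1 else 0)
         else 0
       else 0)
    else 0.

Definition decode (n : nat) (m : mem) : {set 'I_n} :=
  [set i : 'I_n | m (3 + n + n * n + i)%N == 1].

Definition bitlen (q : rat) : nat :=
  (trunc_log 2 (`|numq q|%N).+1 + trunc_log 2 (`|denq q|%N).+1 + 2)%N.

Definition insize (n : nat) (w : 'I_n -> rat) (alpha : rat) : nat :=
  (n + n * n + bitlen alpha + \sum_(i < n) bitlen (w i))%N.

From Pilot Require Import Defs.
From mathcomp Require Import all_boot all_order all_algebra.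
From mathcomp Require Import zify lra.
Set Implicit Arguments. Unset Strict Implicit. Unset Printing Implicit Defensive.
Import Order.TTheory GRing.Theory Num.Theory.
Local Open Scope ring_scope.

(* With critical distance 1, player u is close exactly to its neighbours, so
   its cost splits into independent terms, one per vertex v: an edge to v
   costs alpha, leaving v non-adjacent costs w v, and v is adjacent for free
   when u \in S v.  Buying edges exactly to the v <> u with u \notin S v and
   alpha < w v is therefore a best response, and the weights need not be
   positive nor the strategies loop-free.  This greedy response is computed by
   two linear passes over the input.  The first overwrites each weight w i by
   the 0/1 decision for i, reading S_i(u) through a pointer advanced by n at
   each step; that pointer ends at the output base 3 + n + n * n, which is thus
   obtained without multiplication.  The second pass copies the decisions
   there. *)

Section GreedyBestResponse.
Variables (n : nat) (w : 'I_n -> rat) (alpha : rat).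
Variables (S : {ffun 'I_n -> {set 'I_n}}) (u : 'I_n).

Definition greedy_response : {set 'I_n} :=
  [set v | [&& v != u, u \notin S v & alpha < w v]].

Lemma far1_upd (Y : {set 'I_n}) v :
  far (upd S u Y) 1 u v = [&& v != u, v \notin Y & u \notin S v].
Proof.
rewrite /far /= !inE.
have -> : [exists x in [set u], adj (upd S u Y) x v] = adj (upd S u Y) u v.
  by apply/existsP/idP => [[x /andP[/set1P -> //]] | uv]; exists u; rewrite set11.
rewrite /adj /upd !ffunE eqxx; case: eqVneq => [-> | vu] //=.
by rewrite negb_or.
Qed.

Lemma cost1_upd (Y : {set 'I_n}) :
  cost w alpha 1 (upd S u Y) u =
  \sum_v ((v \in Y)%:R * alpha + [&& v != u, v \notin Y & u \notin S v]%:R * w v).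
Proof.
rewrite /cost big_split /= ffunE eqxx; congr (_ + _).
  rewrite -sum1_card natr_sum mulr_sumr big_mkcond /=.
  by apply: eq_bigr => v _; case: (v \in Y); rewrite /= ?mulr1 ?mul1r ?mul0r.
rewrite big_mkcond; apply: eq_bigr => v _.
by rewrite far1_upd; case: ifP; rewrite ?mul1r ?mul0r.
Qed.

Lemma greedy_best_response : 0 <= alpha ->
  best_response w alpha 1 S u greedy_response.
Proof.
move=> alpha_ge0; split=> [|Y uY]; first by rewrite inE eqxx.
rewrite !cost1_upd; apply: ler_sum => v _; rewrite inE.
case: (eqVneq v u) => [->|_] /=; first by rewrite (negbTE uY).
case: (u \in S v); case: ltrP => hw; case: (v \in Y);
  rewrite /= ?mulr1n ?mulr0n ?mul0r ?addr0 ?add0r //; lra.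
Qed.

End GreedyBestResponse.

Definition upd_mem (m : Defs.mem) (i : nat) (v : rat) : Defs.mem :=
  fun j => if j == i then v else m j.

Lemma upd_mem_eq m i v j : j = i -> upd_mem m i v j = v.
Proof. by move=> ->; rewrite /upd_mem eqxx. Qed.

Lemma upd_mem_ne m i v j : j <> i -> upd_mem m i v j = m j.
Proof. by move=> /eqP ji; rewrite /upd_mem (negbTE ji). Qed.

Arguments upd_mem : simpl never.

Definition runs (c : cmd) (m : Defs.mem) (Q : Defs.mem -> Prop) (B : nat) :=
  exists s m', [/\ (s <= B)%N, forall k, iter s step (c :: k, m) = (k, m') & Q m'].

Lemma runs_conseq c m (P Q : Defs.mem -> Prop) B B' :
  runs c m P B -> (B <= B')%N -> (forall m', P m' -> Q m') -> runs c m Q B'.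
Proof.
move=> [s [m' [sB run Pm']]] BB' PQ; exists s, m'; split=> //; first exact: leq_trans BB'.
exact: PQ.
Qed.

Lemma runs_assign a e m (Q : Defs.mem -> Prop) B : (0 < B)%N ->
  Q (upd_mem m (Num.truncn (eval a m)) (eval e m)) -> runs (Assign a e) m Q B.
Proof. by exists 1%N, (upd_mem m (Num.truncn (eval a m)) (eval e m)). Qed.

Lemma runs_seq c1 c2 m P Q B1 B2 :
  runs c1 m P B1 -> (forall m', P m' -> runs c2 m' Q B2) ->
  runs (Seq c1 c2) m Q (B1 + B2).+1.
Proof.
move=> [s1 [m1 [s1B run1 Pm1]]] /(_ m1 Pm1) [s2 [m2 [s2B run2 Qm2]]].
exists (s2 + (s1 + 1))%N, m2; split=> [|k|//]; first lia.
by rewrite !iterD /= run1 run2.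
Qed.

Lemma runs_seq_assign a e c m Q B :
  runs c (upd_mem m (Num.truncn (eval a m)) (eval e m)) Q B ->
  runs (Seq (Assign a e) c) m Q B.+2.
Proof.
move=> [s [m' [sB run Qm']]]; exists (s + 2)%N, m'; split=> [|k|//]; first lia.
by rewrite iterD /= run.
Qed.

Lemma runs_if b c1 c2 m Q B :
  (test b m -> runs c1 m Q B) -> (~~ test b m -> runs c2 m Q B) ->
  runs (If b c1 c2) m Q B.+1.
Proof.
move=> run1 run2; have [s [m' [sB run Qm']]] :
    runs (if test b m then c1 else c2) m Q B by case: ifP => [/run1|/negbT/run2].
exists (s + 1)%N, m'; split=> [|k|//]; first lia.
by rewrite iterD /= run.
Qed.

Lemma runs_while b c (I : nat -> Defs.mem -> Prop) N B m :
  (forall j m', (j < N)%N -> I j m' -> test b m') ->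
  (forall m', I N m' -> ~~ test b m') ->
  (forall j m', (j < N)%N -> I j m' -> runs c m' (I j.+1) B) ->
  I 0%N m -> runs (While b c) m (I N) (N * B.+2).+1.
Proof.
move=> btrue bfalse body.
suff loop d j m' : (j + d = N)%N -> I j m' -> runs (While b c) m' (I N) (d * B.+2).+1.
  exact: loop.
elim: d j m' => [|d IH] j m' jdN Ijm.
  have <- : j = N by rewrite -jdN addn0.
  by exists 1%N, m'; split=> // k; rewrite /= (negbTE (bfalse m' _)) // -jdN addn0.
have jN : (j < N)%N by lia.
have [s1 [m1 [s1B run1 Im1]]] := body j m' jN Ijm.
have [s2 [m2 [s2B run2 Im2]]] := IH j.+1 m1 ltac:(lia) Im1.
exists (s2 + (s1 + 1))%N, m2; split=> [|k|//]; first by rewrite mulSn; lia.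
by rewrite !iterD /= (btrue j m') // run1 run2.
Qed.

Section Encoding.
Variables (n : nat) (w : 'I_n -> rat) (alpha : rat).
Variables (S : {ffun 'I_n -> {set 'I_n}}) (u : 'I_n).
Local Notation E := (encode w alpha S u).

Lemma encode_weight (v : 'I_n) : E (3 + v)%N = w v.
Proof.
have vn := ltn_ord v; rewrite /encode.
have -> : (3 + v == 0)%N = false by lia.
have -> : (3 + v == 1)%N = false by lia.
have -> : (3 + v == 2)%N = false by lia.
have -> : (3 <= 3 + v < 3 + n)%N by lia.
by rewrite addKn insubT /=; congr w; apply: val_inj.
Qed.

Lemma encode_strategy (x y : 'I_n) :
  E (3 + n + n * x + y)%N = if y \in S x then 1 else 0.
Proof.
have xn := ltn_ord x; have yn := ltn_ord y.
have rown : (n * x + n <= n * n)%N by rewrite -mulnSr leq_mul.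
rewrite /encode.
have -> : (3 + n + n * x + y == 0)%N = false by lia.
have -> : (3 + n + n * x + y == 1)%N = false by lia.
have -> : (3 + n + n * x + y == 2)%N = false by lia.
have -> : (3 <= 3 + n + n * x + y < 3 + n)%N = false by lia.
have -> : (3 + n <= 3 + n + n * x + y < 3 + n + n * n)%N by lia.
have -> : (3 + n + n * x + y - 3 - n = x * n + y)%N by lia.
rewrite divnMDl ?modnMDl ?divn_small ?modn_small ?addn0; try lia.
by rewrite !insubT /=; congr (if _ \in S _ then _ else _); apply: val_inj.
Qed.

End Encoding.

Definition cst (k : nat) : expr := EConst k%:R.
Definition size_reg : expr := ELoad (cst 0).
Definition player_reg : expr := ELoad (cst 1).
Definition alpha_reg : expr := ELoad (cst 2).

(* The two scratch registers are the input cells of S_0(0) and S_1(1), which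
   are never read: the program only inspects S_i(u) for i <> u. *)
Definition counter_addr : expr := EAdd (cst 3) size_reg.
Definition pointer_addr : expr := EAdd (EAdd (cst 4) size_reg) size_reg.
Definition counter : expr := ELoad counter_addr.
Definition pointer : expr := ELoad pointer_addr.
Definition weight_addr : expr := EAdd (cst 3) counter.

Definition set_flag (b : nat) : cmd := Assign weight_addr (cst b).

Definition mark : cmd :=
  If (CEq counter player_reg) (set_flag 0)
    (If (CEq (ELoad (EAdd pointer player_reg)) (cst 1)) (set_flag 0)
      (If (CLt alpha_reg (ELoad weight_addr)) (set_flag 1) (set_flag 0))).

Definition advance (stride : expr) : cmd :=
  Seq (Assign pointer_addr (EAdd pointer stride))
      (Assign counter_addr (EAdd counter (cst 1))).

Definition for_counter (body : cmd) : cmd :=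
  Seq (Assign counter_addr (cst 0)) (While (CLt counter size_reg) body).

Definition scan : cmd :=
  Seq (Assign pointer_addr (EAdd (cst 3) size_reg))
      (for_counter (Seq mark (advance size_reg))).

Definition copy : cmd :=
  for_counter (Seq (Assign pointer (ELoad weight_addr)) (advance (cst 1))).

Definition greedy_program : cmd := Seq scan copy.

Ltac simpl_upd :=
  match goal with |- context [upd_mem ?m ?i ?v ?j] =>
    first [rewrite (@upd_mem_eq m i v j); last by lia
          | rewrite (@upd_mem_ne m i v j); last by lia] end.

Ltac simpl_eval :=
  rewrite /=; repeat (rewrite -?natrD ?natrK;
    first [match goal with h : ?m ?a = _ |- context [?m ?a] => rewrite h end
          | simpl_upd]);
  rewrite -?natrD ?natrK.

Section GreedyProgram.
Variables (n : nat) (w : 'I_n -> rat) (alpha : rat).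
Variables (S : {ffun 'I_n -> {set 'I_n}}) (u : 'I_n).
Hypothesis n_ge2 : (2 <= n)%N.
Local Notation E := (encode w alpha S u).
Local Notation counter_cell := (3 + n)%N.
Local Notation pointer_cell := (4 + n + n)%N.
Local Notation strategy_cell x y := (3 + n + n * x + y)%N.
Local Notation output_cell i := (3 + n + n * n + i)%N.
Local Notation flag v := ((v \in greedy_response w alpha S u : nat)%:R : rat).

Lemma runs_for_counter body (I : nat -> Defs.mem -> Prop) B m :
  (forall j m', I j m' -> m' 0%N = n%:R /\ m' counter_cell = j%:R) ->
  (forall j m', (j < n)%N -> I j m' -> runs body m' (I j.+1) B) ->
  m 0%N = n%:R -> I 0%N (upd_mem m counter_cell 0) ->
  runs (for_counter body) m (I n) (n * B.+2).+3.
Proof.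
move=> regs step m0 I0.
have init : runs (Assign counter_addr (cst 0)) m (I 0%N) 1.
  by apply: runs_assign => //; simpl_eval.
have loop m' :
    I 0%N m' -> runs (While (CLt counter size_reg) body) m' (I n) (n * B.+2).+1.
  apply: runs_while => // [j m'' jn|m''] /regs[m''0 m''c];
  by simpl_eval; rewrite ltr_nat ?ltnn.
by apply: runs_conseq (runs_seq init loop) _ _; rewrite ?add1n.
Qed.

Lemma strategy_cell_neq (x : 'I_n) : x != u ->
  strategy_cell x u <> counter_cell /\ strategy_cell x u <> pointer_cell.
Proof.
have un := ltn_ord u; case: x => [[|[|x]] xn]; rewrite -val_eqE /=; lia.
Qed.

Record scan_state (i : nat) (m : Defs.mem) : Prop := ScanState {
  scan_size : m 0%N = n%:R;
  scan_player : m 1%N = (val u)%:R;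
  scan_cost : m 2%N = alpha;
  scan_counter : m counter_cell = i%:R;
  scan_pointer : m pointer_cell = (3 + n + n * i)%N%:R;
  scan_flags : forall v : 'I_n, (v < i)%N -> m (3 + v)%N = flag v;
  scan_weights : forall v : 'I_n, (i <= v)%N -> m (3 + v)%N = w v;
  scan_strategies : forall x : 'I_n, x != u ->
    m (strategy_cell x u) = if u \in S x then 1 else 0 }.

Lemma runs_mark m (v : 'I_n) : scan_state v m ->
  runs mark m (eq (upd_mem m (3 + v)%N (flag v))) 4.
Proof.
move=> [m0 m1 m2 mc mp _ mw ms]; rewrite /mark /set_flag.
have wv : m (3 + v)%N = w v by rewrite mw.
apply: runs_if; simpl_eval; rewrite eqr_nat val_eqE => vu.
  by apply: runs_assign => //; simpl_eval; rewrite inE vu.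
apply: runs_if; simpl_eval; rewrite ms //.
  case: ifP => [uS _|_]; last by rewrite eq_sym oner_eq0.
  by apply: runs_assign => //; simpl_eval; rewrite inE uS andbF.
case: ifP => [_|uS _]; first by rewrite eqxx.
apply: runs_if; simpl_eval => lt; apply: runs_assign => //; simpl_eval;
  by rewrite inE vu uS /=; case: (alpha < w v) lt.
Qed.

Lemma scan_step i m : (i < n)%N -> scan_state i m ->
  runs (Seq mark (advance size_reg)) m (scan_state i.+1) 8.
Proof.
move=> iin st; apply: runs_seq (runs_mark (v := Ordinal iin) st) _ => _ <- /=.
case: st => m0 m1 m2 mc mp mf mw ms.
apply: runs_seq_assign; apply: runs_assign => //; simpl_eval.
have un := ltn_ord u.
constructor=> [|||||v vi|v iv|x xu]; do ?simpl_upd => //.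
- by rewrite addn1.
- by congr _%:R; lia.
- have vn := ltn_ord v; do 2?simpl_upd.
  have [vi'|vi'] := eqVneq (v : nat) i; last by simpl_upd; rewrite mf //; lia.
  have -> : v = Ordinal iin by apply: val_inj.
  by rewrite upd_mem_eq.
- by have vn := ltn_ord v; do ?simpl_upd; rewrite mw //; lia.
- by have [? ?] := strategy_cell_neq xu; do ?simpl_upd; rewrite ms.
Qed.

Lemma runs_scan : runs scan E (scan_state n) (5 + n * 10).
Proof.
have un := ltn_ord u; have e0 : E 0%N = n%:R by [].
apply: runs_seq_assign; apply: runs_for_counter; simpl_eval => //.
- by move=> j m [].
- exact: scan_step.
constructor=> [|||||v|v _|x xu]; do ?simpl_upd => //.
- by rewrite muln0 addn0.
- by rewrite ltn0.
- by have vn := ltn_ord v; do ?simpl_upd; rewrite encode_weight.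
- by have [? ?] := strategy_cell_neq xu; do ?simpl_upd; rewrite encode_strategy.
Qed.

Record copy_state (i : nat) (m : Defs.mem) : Prop := CopyState {
  copy_size : m 0%N = n%:R;
  copy_counter : m counter_cell = i%:R;
  copy_pointer : m pointer_cell = (output_cell i)%:R;
  copy_flags : forall v : 'I_n, m (3 + v)%N = flag v;
  copy_outputs : forall v : 'I_n, (v < i)%N -> m (output_cell v) = flag v }.

Lemma copy_step i m : (i < n)%N -> copy_state i m ->
  runs (Seq (Assign pointer (ELoad weight_addr)) (advance (cst 1))) m
       (copy_state i.+1) 5.
Proof.
move=> iin [m0 mc mp mf mo]; have nn : (n + n <= n * n)%N by nia.
apply: runs_seq_assign; apply: runs_seq_assign; apply: runs_assign => //; simpl_eval.
rewrite (mf (Ordinal iin)).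
constructor=> [|||v|v vi]; do ?simpl_upd => //.
- by rewrite addn1.
- by congr _%:R; lia.
- by have vn := ltn_ord v; do ?simpl_upd; rewrite mf.
- have vn := ltn_ord v; do ?simpl_upd.
  have [vi'|vi'] := eqVneq (v : nat) i; last by simpl_upd; rewrite mo //; lia.
  have -> : v = Ordinal iin by apply: val_inj.
  by rewrite upd_mem_eq.
Qed.

Lemma runs_copy m : scan_state n m -> runs copy m (copy_state n) (3 + n * 7).
Proof.
move=> [m0 _ _ _ mp mf _ _]; apply: runs_for_counter; simpl_eval => //.
- by move=> j m' [].
- exact: copy_step.
constructor=> [|||v|v] //; do ?simpl_upd => //.
- by rewrite addn0.
- by have vn := ltn_ord v; simpl_upd; rewrite mf.
Qed.

Lemma decode_copy_state m : copy_state n m -> decode n m = greedy_response w alpha S u.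
Proof.
by move=> [_ _ _ _ mo]; apply/setP => v; rewrite inE mo // pnatr_eq1; case: (_ \in _).
Qed.

Lemma runs_greedy_program :
  runs greedy_program E (fun m => decode n m = greedy_response w alpha S u)
       (9 + n * 17).
Proof.
apply: runs_conseq (runs_seq runs_scan runs_copy) _ decode_copy_state.
lia.
Qed.

End GreedyProgram.

Lemma affine_le_pow n x : (n <= x)%N -> (9 + n * 17 <= 20 * x.+1 ^ 20)%N.
Proof.
move=> nx; have : (x.+1 <= x.+1 ^ 20)%N by rewrite -{1}(expn1 x.+1) leq_pexp2l.
lia.
Qed.

Theorem proposition10 :
  exists (P : cmd) (c : nat),
    forall (n : nat) (w : 'I_n -> rat) (alpha : rat)
           (S : {ffun 'I_n -> {set 'I_n}}) (u : 'I_n),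
      (1 <= n.-1)%N ->
      0 < alpha ->
      (forall v, 0 < w v) ->
      (forall x, x \notin S x) ->
      exists t : nat,
        (t <= c * (insize w alpha).+1 ^ c)%N /\
        (iter t step ([:: P], encode w alpha S u)).1 = [::] /\
        best_response w alpha 1 S u
          (decode n (iter t step ([:: P], encode w alpha S u)).2).
Proof.
exists greedy_program, 20%N => n w alpha S u n_ge2 alpha_gt0 _ _.
have [|t [m [t_le run decode_m]]] := runs_greedy_program w alpha S u; first by lia.
exists t; rewrite run decode_m; split; last by split=> //; exact/greedy_best_response/ltW.
by apply: leq_trans t_le (affine_le_pow _); rewrite /insize; lia.
Qed.
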